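(* Let $m\leqslant n$ be natural numbers. For $k\in\{1,\dots,2^m-1\}$ let $Q^k(n)=|\{s\in\{0,\dots,n-1\}: k_s=0\text{ and }b^k_{s+1}\neq 0\}|$. Then $$Q(m,n):=\sum_{k=1}^{2^m-1}Q^k(n)=2^m\left(n-\frac m2-1\right)-n+m+1.$$
   Context: For an integer $k\geqslant 0$, $k_i$ are its binary digits ($k=\sum_ik_i2^i$) and $b^k_{s}=k\bmod 2^s$ for $s\geqslant 0$. ($Q(m,n)$ is the number of multi-controlled gates used in the paper's column-by-column decomposition of an $m$ to $n$ isometry.) *)

From mathcomp Require Import all_boot all_order all_algebra.
Set Implicit Arguments. Unset Strict Implicit. Unset Printing Implicit Defensive.

Definition bitn (k i : nat) : nat := (k %/ 2 ^ i) %% 2.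

Definition bks (k s : nat) : nat := k %% 2 ^ s.

Definition Qk (n k : nat) : nat :=
  #|[set s : 'I_n | (bitn k s == 0) && (bks k s.+1 != 0)]|.

Definition Qmn (m n : nat) : nat := \sum_(1 <= k < 2 ^ m) Qk n k.

From mathcomp Require Import all_boot all_order all_algebra.
From mathcomp Require Import zify lra.

Set Implicit Arguments.
Unset Strict Implicit.
Unset Printing Implicit Defensive.

(* Induction on m, splitting 1 <= k < 2^(m+1) at 2^m.  For 0 < j < 2^m, setting
   the leading bit m of j removes exactly the position s = m from the count, so
   Q^(2^m + j)(n) = Q^j(n) - 1 when m < n; and k = 2^m contributes the n - m - 1
   positions above m.  Hence Q(m+1,n) = 2 Q(m,n) + (n - m - 1) - (2^m - 1), which
   the closed form satisfies. *)

Lemma bitn_small j s : j < 2 ^ s -> bitn j s = 0.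
Proof. by move=> js; rewrite /bitn divn_small. Qed.

Lemma bks_small j s : j < 2 ^ s -> bks j s = j.
Proof. exact: modn_small. Qed.

Lemma bitn_addMl a m j s : s < m -> bitn (a * 2 ^ m + j) s = bitn j s.
Proof.
move=> sm; rewrite /bitn.
have -> : a * 2 ^ m = a * 2 ^ (m - s.+1) * 2 * 2 ^ s.
  by rewrite -!mulnA -expnS -expnD subnK.
by rewrite divnMDl ?expn_gt0 // modnMDl.
Qed.

Lemma bks_addMl a m j s : s <= m -> bks (a * 2 ^ m + j) s = bks j s.
Proof.
move=> sm; rewrite /bks.
by rewrite -(subnK sm) expnD mulnA modnMDl.
Qed.

Lemma bitn_pow_add m j : j < 2 ^ m -> bitn (2 ^ m + j) m = 1.
Proof. by move=> jm; rewrite /bitn divnDl // divnn expn_gt0 divn_small. Qed.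

Definition Qk_bit (k s : nat) : nat := (bitn k s == 0) && (bks k s.+1 != 0).

Lemma QkE n k : Qk n k = \sum_(s < n) Qk_bit k s.
Proof.
rewrite /Qk cardsE -sum1_card big_mkcond /=.
apply: eq_bigr => s _; rewrite /Qk_bit unfold_in; by case: ifP.
Qed.

Lemma Qk_bit_pow m s : Qk_bit (2 ^ m) s = (m < s).
Proof.
rewrite /Qk_bit; case: (ltngtP s m) => [sm | ms | ->].
- have /eqP -> : bks (2 ^ m) s.+1 == 0 by exact: dvdn_exp2l.
  by rewrite andbF.
- rewrite bitn_small ?bks_small ?ltn_exp2l //; last exact: leqW.
  by rewrite -lt0n expn_gt0.
- by rewrite -[2 ^ m]addn0 bitn_pow_add ?expn_gt0.
Qed.

Lemma Qk_bit_pow_add m j s :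
  0 < j < 2 ^ m -> Qk_bit j s = Qk_bit (2 ^ m + j) s + (s == m).
Proof.
case/andP=> j_gt0 jm.
have jmS : j < 2 ^ m.+1 by apply: (leq_trans jm); rewrite leq_exp2l.
have jm1 : 2 ^ m + j < 2 ^ m.+1 by rewrite expnS; lia.
have ltn_pow x t : x < 2 ^ m.+1 -> m < t -> x < 2 ^ t.
  by move=> xm mt; apply: (leq_trans xm); rewrite leq_exp2l.
rewrite /Qk_bit; case: (ltngtP s m) => [sm | ms | ->].
- by rewrite -[2 ^ m]mul1n bitn_addMl // bks_addMl // addn0.
- rewrite !bitn_small ?bks_small ?(ltn_pow _ _ _ ms) ?(ltn_pow _ _ _ (leqW ms)) //=.
  by rewrite addn0 -!lt0n j_gt0 ltn_addl.
- by rewrite bitn_small // bks_small // bitn_pow_add //=; lia.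
Qed.

Lemma sum_ord_gtn m n : \sum_(s < n) (m < s) = n - m.+1.
Proof.
elim: n => [|n IHn]; first by rewrite big_ord0.
by rewrite big_ord_recr /= IHn; case: ltnP => /=; lia.
Qed.

Lemma sum_ord_eq m n : m < n -> \sum_(s < n) (s == m :> nat) = 1.
Proof.
move=> mn; rewrite (bigD1 (Ordinal mn)) //= eqxx big1 // => s.
by rewrite -val_eqE /= => /negbTE ->.
Qed.

Lemma Qk_pow m n : Qk n (2 ^ m) = n - m.+1.
Proof. by rewrite QkE -(sum_ord_gtn m n); apply: eq_bigr => s _; rewrite Qk_bit_pow. Qed.

Lemma Qk_pow_add m n j : m < n -> 0 < j < 2 ^ m -> Qk n j = Qk n (2 ^ m + j) + 1.
Proof.
move=> mn jm; rewrite !QkE (eq_bigr _ (fun (s : 'I_n) _ => Qk_bit_pow_add s jm)).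
by rewrite big_split /= sum_ord_eq.
Qed.

Lemma Qmn_rec m n : m < n -> Qmn m.+1 n + (2 ^ m - 1) = 2 * Qmn m n + (n - m.+1).
Proof.
move=> mn; have pow_gt0 : 0 < 2 ^ m := expn_gt0 2 m.
have powS : 2 ^ m.+1 = 2 ^ m + 2 ^ m by rewrite expnS mul2n -addnn.
have shift_top : Qmn m n = \sum_(1 <= j < 2 ^ m) Qk n (2 ^ m + j) + (2 ^ m - 1).
  rewrite /Qmn -[2 ^ m - 1]muln1 -sum_nat_const_nat -big_split /=.
  by apply: eq_big_nat => j; exact: Qk_pow_add.
have split_top : Qmn m.+1 n = Qmn m n + Qk n (2 ^ m) + \sum_(1 <= j < 2 ^ m) Qk n (2 ^ m + j).
  rewrite /Qmn (@big_cat_nat _ _ _ (2 ^ m)) ?powS ?leq_addr //.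
  rewrite (@big_ltn _ _ _ (2 ^ m)) /=; last by rewrite -{1}[2 ^ m]addn0 ltn_add2l.
  rewrite -[(2 ^ m).+1]add1n big_addn addnK addnA.
  by congr (_ + _); apply: eq_bigr => i _; rewrite addnC.
rewrite split_top Qk_pow {2}shift_top; lia.
Qed.

Lemma Qmn_double m n :
  m <= n -> 2 * Qmn m n + 2 ^ m * (m + 2) + 2 * n = 2 ^ m * (2 * n) + 2 * m + 2.
Proof.
elim: m => [_ | m IHm mn]; first by rewrite /Qmn big_geq //; lia.
have := Qmn_rec mn; have := IHm (ltnW mn); have := expn_gt0 2 m.
rewrite expnS; lia.
Qed.

Import GRing.Theory.
Local Open Scope ring_scope.

Theorem corollary1 (m n : nat) (hmn : (m <= n)%N) :
  (Qmn m n)%:R =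
    (2 ^+ m) * (n%:R - m%:R / 2 - 1) - n%:R + m%:R + 1 :> rat.
Proof.
have /(congr1 (fun x => x%:R : rat)) := Qmn_double hmn.
rewrite !natrD !natrM natrX; lra.
Qed.
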